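(* Let $\Gamma\subseteq\mathit{Aff}(2,\mathbb{H})$ be a subgroup acting freely on $\mathbb{H}^2$. Then for every $A\in\Gamma$, the holonomy part $h(A)$ has $1$ as a right eigenvalue.
   Context: $\mathit{Aff}(2,\mathbb{H})$ is identified with invertible $3\times3$ quaternionic matrices $A=\begin{pmatrix} a&b&r\\ c&d&s\\ 0&0&1\end{pmatrix}$ acting on $(x,y)\in\mathbb{H}^2$ by $(x,y)\mapsto(ax+by+r,cx+dy+s)$. The holonomy part of $A$ is $h(A)=\begin{pmatrix}a&b\\ c&d\end{pmatrix}\in GL(2,\mathbb{H})$. A right eigenvalue of a quaternionic matrix $T$ is $\lambda\in\mathbb{H}$ with $Tv=v\lambda$ for some nonzero $v\in\mathbb{H}^2$. *)

From HB Require Import structures.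
From mathcomp Require Import all_boot all_order all_algebra.
From mathcomp Require Import reals.
Set Implicit Arguments. Unset Strict Implicit. Unset Printing Implicit Defensive.
Import Order.TTheory GRing.Theory Num.Theory.
Local Open Scope ring_scope.

Section Quaternions.
Variable R : realType.

(** Real quaternions q = q0 + q1 i + q2 j + q3 k. *)
Record quat := Quat { q0 : R; q1 : R; q2 : R; q3 : R }.

Definition qzero : quat := Quat 0 0 0 0.
Definition qone : quat := Quat 1 0 0 0.
Definition qadd (p q : quat) : quat :=
  Quat (q0 p + q0 q) (q1 p + q1 q) (q2 p + q2 q) (q3 p + q3 q).
(** Hamilton product: i^2 = j^2 = k^2 = ijk = -1. *)
Definition qmul (p q : quat) : quat :=
  Quat (q0 p * q0 q - q1 p * q1 q - q2 p * q2 q - q3 p * q3 q)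
       (q0 p * q1 q + q1 p * q0 q + q2 p * q3 q - q3 p * q2 q)
       (q0 p * q2 q - q1 p * q3 q + q2 p * q0 q + q3 p * q1 q)
       (q0 p * q3 q + q1 p * q2 q - q2 p * q1 q + q3 p * q0 q).

Record qmat2 := QMat2 { m11 : quat; m12 : quat; m21 : quat; m22 : quat }.

Definition qmat2_apply (T : qmat2) (v : quat * quat) : quat * quat :=
  (qadd (qmul (m11 T) v.1) (qmul (m12 T) v.2),
   qadd (qmul (m21 T) v.1) (qmul (m22 T) v.2)).

Definition right_eigenvalue (T : qmat2) (lam : quat) : Prop :=
  exists v : quat * quat, v <> (qzero, qzero) /\
    qmat2_apply T v = (qmul v.1 lam, qmul v.2 lam).

(** The matrix [[a b r];[c d s];[0 0 1]]. *)
Record qaff := QAff { aa : quat; ab : quat; ac : quat; ad : quat;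
                      ar : quat; as_ : quat }.

Definition qaff_act (A : qaff) (p : quat * quat) : quat * quat :=
  (qadd (qadd (qmul (aa A) p.1) (qmul (ab A) p.2)) (ar A),
   qadd (qadd (qmul (ac A) p.1) (qmul (ad A) p.2)) (as_ A)).

(** Product of 3x3 matrices of the above shape. *)
Definition qaff_mul (A B : qaff) : qaff :=
  QAff (qadd (qmul (aa A) (aa B)) (qmul (ab A) (ac B)))
       (qadd (qmul (aa A) (ab B)) (qmul (ab A) (ad B)))
       (qadd (qmul (ac A) (aa B)) (qmul (ad A) (ac B)))
       (qadd (qmul (ac A) (ab B)) (qmul (ad A) (ad B)))
       (qadd (qadd (qmul (aa A) (ar B)) (qmul (ab A) (as_ B))) (ar A))
       (qadd (qadd (qmul (ac A) (ar B)) (qmul (ad A) (as_ B))) (as_ A)).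

Definition qaff_one : qaff := QAff qone qzero qzero qone qzero qzero.

(** Invertible as a 3x3 quaternionic matrix (two-sided inverse; an inverse of
    such a matrix is automatically of the same affine shape, and we take it so). *)
Definition qaff_inverse (A B : qaff) : Prop :=
  qaff_mul A B = qaff_one /\ qaff_mul B A = qaff_one.

Definition holonomy (A : qaff) : qmat2 := QMat2 (aa A) (ab A) (ac A) (ad A).

Definition is_aff_subgroup (G : qaff -> Prop) : Prop :=
  [/\ G qaff_one,
      (forall A B, G A -> G B -> G (qaff_mul A B)) &
      (forall A, G A -> exists B, G B /\ qaff_inverse A B)].

Definition acts_freely (G : qaff -> Prop) : Prop :=
  forall A, G A -> (exists p, qaff_act A p = p) -> A = qaff_one.

End Quaternions.

From HB Require Import structures.
From mathcomp Require Import all_boot all_order all_algebra.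
From mathcomp Require Import reals.
From mathcomp Require Import ring.
Set Implicit Arguments. Unset Strict Implicit. Unset Printing Implicit Defensive.
Import GRing.Theory Num.Theory.
Local Open Scope ring_scope.

(* The quaternions form a division ring, and over a division ring a 2x2 linear
   system is either singular or onto (Gaussian elimination on a nonzero pivot).
   Apply this to h(A) - 1.  A nonzero kernel vector of h(A) - 1 is a right
   eigenvector of h(A) for the eigenvalue 1.  Otherwise (h(A) - 1) v = -(r, s)
   has a solution v, which is a fixed point of A; freeness then forces A = 1,
   and the identity has the right eigenvalue 1. *)

Section LinearSystem2.
Variable R : unitRingType.
Hypothesis nz_unit : forall x : R, x != 0 -> x \is a GRing.unit.

Definition lin2 (a b c d : R) (v : R * R) : R * R :=
  (a * v.1 + b * v.2, c * v.1 + d * v.2).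

Definition lin2_singular (a b c d : R) : Prop :=
  exists2 v, v != (0, 0) & lin2 a b c d v = (0, 0).
Definition lin2_onto (a b c d : R) : Prop := forall w, exists v, lin2 a b c d v = w.

Lemma lin2_singular_or_onto_unit a b c d : a \is a GRing.unit ->
  lin2_singular a b c d \/ lin2_onto a b c d.
Proof.
(* [del] is the Schur complement of the pivot [a]. *)
move=> ua; set del := d - c * a^-1 * b.
have [del0 | /nz_unit udel] := eqVneq del 0.
  left; exists (- (a^-1 * b), 1); first by rewrite xpair_eqE oner_eq0 andbF.
  rewrite /lin2 /= !mulr1 !mulrN mulVKr // addNr; congr pair.
  by rewrite addrC mulrA.
right=> -[r s]; set y := del^-1 * (s - c * a^-1 * r).
exists (a^-1 * (r - b * y), y); rewrite /lin2 /= mulVKr // subrK; congr pair.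
rewrite mulrA mulrBr addrAC -addrA [c / a * (b * y)]mulrA -mulrBl -/del.
by rewrite /y mulrA mulrV // mul1r addrC subrK.
Qed.

Lemma lin2_swap a b c d v :
  lin2 c d a b v = ((lin2 a b c d v).2, (lin2 a b c d v).1).
Proof. by []. Qed.

Lemma lin2_singular_or_onto a b c d : lin2_singular a b c d \/ lin2_onto a b c d.
Proof.
have [a0 | /nz_unit ua] := eqVneq a 0; last exact: lin2_singular_or_onto_unit.
have [c0 | /nz_unit uc] := eqVneq c 0.
  left; exists (1, 0); first by rewrite xpair_eqE oner_eq0.
  by rewrite /lin2 a0 c0 /= !mulr0 !mul0r !addr0.
have [[v v_neq0 kerv] | onto] := lin2_singular_or_onto_unit d a b uc.
  by left; exists v => //; rewrite lin2_swap kerv.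
right=> -[r s]; have [v ev] := onto (s, r).
by exists v; move: ev; rewrite lin2_swap; case: (lin2 a b c d v) => ? ? [-> ->].
Qed.

Lemma lin2_subr1 a b c d v :
  lin2 (a - 1) b c (d - 1) v = ((lin2 a b c d v).1 - v.1, (lin2 a b c d v).2 - v.2).
Proof. by rewrite /lin2 /= !mulrBl !mul1r addrAC addrA. Qed.

End LinearSystem2.

Section QuaternionDivisionRing.
Variable R : realType.
Local Notation H := (quat R).

Definition quat_tuple (p : H) : R * R * R * R := (q0 p, q1 p, q2 p, q3 p).
Definition tuple_quat (t : R * R * R * R) : H := let: (a, b, c, d) := t in Quat a b c d.
Lemma quat_tupleK : cancel quat_tuple tuple_quat. Proof. by case. Qed.
HB.instance Definition _ := Choice.copy H (can_type quat_tupleK).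

Lemma quatP (p q : H) :
  q0 p = q0 q -> q1 p = q1 q -> q2 p = q2 q -> q3 p = q3 q -> p = q.
Proof. by case: p => ????; case: q => ???? /= -> -> -> ->. Qed.

Local Ltac quat_ring := move=> *; apply: quatP; rewrite /=; ring.

Definition qopp (p : H) : H := Quat (- q0 p) (- q1 p) (- q2 p) (- q3 p).

Lemma qaddA : associative (@qadd R). Proof. by quat_ring. Qed.
Lemma qaddC : commutative (@qadd R). Proof. by quat_ring. Qed.
Lemma qadd0r : left_id (qzero R) (@qadd R). Proof. by quat_ring. Qed.
Lemma qaddNr : left_inverse (qzero R) qopp (@qadd R). Proof. by quat_ring. Qed.
HB.instance Definition _ := GRing.isZmodule.Build H qaddA qaddC qadd0r qaddNr.

Lemma qmulA : associative (@qmul R). Proof. by quat_ring. Qed.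
Lemma qmul1r : left_id (qone R) (@qmul R). Proof. by quat_ring. Qed.
Lemma qmulr1 : right_id (qone R) (@qmul R). Proof. by quat_ring. Qed.
Lemma qmulDl : left_distributive (@qmul R) (@qadd R). Proof. by quat_ring. Qed.
Lemma qmulDr : right_distributive (@qmul R) (@qadd R). Proof. by quat_ring. Qed.
Lemma qone_neq0 : qone R != qzero R.
Proof. by apply/eqP => -[/eqP]; rewrite oner_eq0. Qed.
HB.instance Definition _ :=
  GRing.Zmodule_isNzRing.Build H qmulA qmul1r qmulr1 qmulDl qmulDr qone_neq0.

Definition qnorm (p : H) : R := q0 p ^+ 2 + q1 p ^+ 2 + q2 p ^+ 2 + q3 p ^+ 2.
Definition qinv (p : H) : H :=
  Quat (q0 p / qnorm p) (- q1 p / qnorm p) (- q2 p / qnorm p) (- q3 p / qnorm p).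

Lemma qnorm_eq0 (p : H) : (qnorm p == 0) = (p == 0).
Proof.
rewrite /qnorm !paddr_eq0 ?addr_ge0 ?sqr_ge0 // !sqrf_eq0.
apply/idP/eqP => [| ->]; last by rewrite !eqxx.
by rewrite -!andbA => /and4P[/eqP ? /eqP ? /eqP ? /eqP ?]; apply: quatP.
Qed.

Definition quat_unit := [pred p : H | p != 0].

Lemma qmulVr : {in quat_unit, left_inverse (qone R) qinv (@qmul R)}.
Proof.
move=> p; rewrite inE -qnorm_eq0 => np.
by apply: quatP; rewrite /= /qnorm in np *; field; exact: np.
Qed.

Lemma qmulrV : {in quat_unit, right_inverse (qone R) qinv (@qmul R)}.
Proof.
move=> p; rewrite inE -qnorm_eq0 => np.
by apply: quatP; rewrite /= /qnorm in np *; field; exact: np.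
Qed.

Lemma qunitrP (p q : H) : q * p = 1 /\ p * q = 1 -> quat_unit p.
Proof.
move=> [qp1 _]; apply/eqP => p0; move/eqP: qp1.
by rewrite p0 mulr0 eq_sym oner_eq0.
Qed.

Lemma qinv_out : {in [predC quat_unit], qinv =1 id}.
Proof.
by move=> p; rewrite !inE negbK => /eqP ->; apply: quatP; rewrite /= ?oppr0 mul0r.
Qed.

HB.instance Definition _ :=
  GRing.NzRing_hasMulInverse.Build H qmulVr qmulrV qunitrP qinv_out.

Lemma quat_unitf (p : H) : p != 0 -> p \is a GRing.unit.
Proof. by []. Qed.

Lemma qaddE (p q : H) : qadd p q = p + q. Proof. by []. Qed.
Lemma qmulE (p q : H) : qmul p q = p * q. Proof. by []. Qed.
Lemma qzeroE : qzero R = 0. Proof. by []. Qed.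
Lemma qoneE : qone R = 1. Proof. by []. Qed.

End QuaternionDivisionRing.

Lemma qmat2_applyE (R : realType) (T : qmat2 R) v :
  qmat2_apply T v = lin2 (m11 T) (m12 T) (m21 T) (m22 T) v.
Proof. by []. Qed.

Lemma right_eigenvalue1P (R : realType) (T : qmat2 R) :
  right_eigenvalue T (qone R) <-> lin2_singular (m11 T - 1) (m12 T) (m21 T) (m22 T - 1).
Proof.
split=> [[v [/eqP v_neq0 Tv]] | [v /eqP v_neq0 kerv]]; exists v => //.
  by rewrite lin2_subr1 -qmat2_applyE Tv /= !qmulE !mulr1 !subrr.
move/eqP: kerv; rewrite lin2_subr1 xpair_eqE !subr_eq0 => /andP[/eqP e1 /eqP e2].
by split=> //; rewrite qmat2_applyE !qmulE !mulr1 -e1 -e2; case: lin2.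
Qed.

Lemma qaff_act_fixed (R : realType) (A : qaff R) v :
  lin2 (aa A - 1) (ab A) (ac A) (ad A - 1) v = (- ar A, - as_ A) -> qaff_act A v = v.
Proof.
rewrite lin2_subr1 => /eqP; rewrite xpair_eqE /= !subr_eq => /andP[/eqP e1 /eqP e2].
rewrite /qaff_act !qaddE !qmulE e1 e2 (addrC (- ar A)) (addrC (- as_ A)) !subrK.
by case: v {e1 e2}.
Qed.

Theorem mainTheorem6 (R : realType) (G : qaff R -> Prop) :
  is_aff_subgroup G -> acts_freely G ->
  forall A, G A -> right_eigenvalue (holonomy A) (qone R).
Proof.
move=> _ free A GA.
have [sing | onto] := lin2_singular_or_onto (@quat_unitf R)
  (aa A - 1) (ab A) (ac A) (ad A - 1); first exact/right_eigenvalue1P.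
have [v /qaff_act_fixed fixv] := onto (- ar A, - as_ A).
rewrite (free A GA); last by exists v.
apply/right_eigenvalue1P; exists (1, 0); first by rewrite xpair_eqE oner_eq0.
by rewrite /lin2 /= qoneE qzeroE subrr !mul0r addr0.
Qed.
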